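(* Let $p$ be a prime number. The $p$-adic topology on $\mathbb{N}\setminus p\mathbb{N}$ coincides with the zero-dimensional reflection of the subspace topology on $\mathbb{N}\setminus p\mathbb{N}$ inherited from the Golomb space $\mathbb{N}_\tau$.
   Context: $\mathbb{N}=\{1,2,\dots\}$, $\mathbb{N}_0=\{0\}\cup\mathbb{N}$. The Golomb topology $\tau$ on $\mathbb{N}$ is generated by the base of all sets $a+b\mathbb{N}_0=\{a+bn:n\in\mathbb{N}_0\}$ with $a,b\in\mathbb{N}$ coprime, and $\mathbb{N}_\tau=(\mathbb{N},\tau)$. The $p$-adic topology on a subset of $\mathbb{N}$ is the topology induced from the $p$-adic topology on $\mathbb{Z}$ (base: sets $x+p^n\mathbb{Z}$, $x\in\mathbb{Z}$, $n\in\mathbb{N}$); on $\mathbb{N}$ it is generated by the sets $x+p^n\mathbb{N}_0$, $x,n\in\mathbb{N}$. The zero-dimensional reflection of a topological space $X$ is the set $X$ with the topology generated by the base consisting of all clopen subsets of $X$. *)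

From mathcomp Require Import all_boot all_algebra.
Set Implicit Arguments. Unset Strict Implicit. Unset Printing Implicit Defensive.

Definition subsetP (A B : nat -> Prop) : Prop := forall x, A x -> B x.

Definition arith_prog (a b : nat) : nat -> Prop := fun m => exists n, m = a + b * n.

(* Golomb topology on N = {1,2,...}: generated by the base of all a + b N_0
   with a, b in N (i.e. >= 1) coprime; open sets = unions of base sets. *)
Definition golomb_open (U : nat -> Prop) : Prop :=
  forall x, U x -> exists a b, [/\ 0 < a, 0 < b, coprime a b,
                                  arith_prog a b x & subsetP (arith_prog a b) U].

Definition subspace_open (T : (nat -> Prop) -> Prop) (X : nat -> Prop)
  (V : nat -> Prop) : Prop :=
  exists U, T U /\ forall x, V x <-> (U x /\ X x).

Definition clopen_in (X : nat -> Prop) (TX : (nat -> Prop) -> Prop)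
  (C : nat -> Prop) : Prop :=
  [/\ subsetP C X, TX C & TX (fun x => X x /\ ~ C x)].

(* Zero-dimensional reflection of (X, TX): topology generated by the base of
   all clopen subsets, i.e. open sets are the unions of clopen sets. *)
Definition zero_dim_reflection_open (X : nat -> Prop)
  (TX : (nat -> Prop) -> Prop) (W : nat -> Prop) : Prop :=
  forall x, W x -> exists C, [/\ clopen_in X TX C, C x & subsetP C W].

Definition padic_open_Z (p : nat) (U : int -> Prop) : Prop :=
  forall x, U x -> exists n, 0 < n /\
    forall y : int, (Posz (p ^ n)%N %| (y - x)%R)%Z -> U y.

Definition padic_open_sub (p : nat) (X : nat -> Prop) (W : nat -> Prop) : Prop :=
  exists U, padic_open_Z p U /\ forall m, W m <-> (U (Posz m) /\ X m).

Definition N_minus_pN (p : nat) : nat -> Prop := fun m => 0 < m /\ ~~ (p %| m).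

From Stdlib Require Import Classical.
From mathcomp Require Import all_boot all_algebra zify ring.

Set Implicit Arguments. Unset Strict Implicit. Unset Printing Implicit Defensive.
Import GRing.Theory.

(* A residue class of N \ pN modulo p^n, and likewise its complement, is a union
   of Golomb basic sets a + p^n N_0, so p-adic balls are clopen in the Golomb
   subspace. Conversely, let C be clopen, m in C with m + b N_0 inside C, and p^n
   the p-part of b. If some y = m (mod p^n) of N \ pN had y + c N_0 outside C,
   take x = y (mod p^(n+k)) divisible by the p-free parts of b and c (Chinese
   remainder theorem). A Golomb neighbourhood x + e N_0 with e coprime to x has
   gcd(e, c) | p^k, resp. gcd(e, b) | p^n, so it meets y + c N_0 if x lies in C,
   and m + b N_0 otherwise: a contradiction either way. *)

Lemma eqn_mod_dvdz (d m n : nat) :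
  (m == n %[mod d]) = (Posz d %| (Posz m - Posz n)%R)%Z.
Proof. by rewrite -eqz_mod_dvd !modz_nat. Qed.

Lemma eqn_mod_dvdm (d b x y : nat) : d %| b -> x = y %[mod b] -> x = y %[mod d].
Proof. by move=> db exy; rewrite -(modn_dvdm x db) exy modn_dvdm. Qed.

Lemma arith_prog_int (a b z : nat) :
  arith_prog a b z <-> exists2 s : int, (0 <= s)%R & Posz z = (Posz a + Posz b * s)%R.
Proof.
split=> [[n ->]|[s s_ge0]]; first by exists (Posz n).
by rewrite -(gez0_abs s_ge0) -PoszM -PoszD => -[->]; exists `|s|%N.
Qed.

Lemma arith_prog_meet (x y e c : nat) : 0 < e -> 0 < c -> x = y %[mod gcdn e c] ->
  exists z, arith_prog x e z /\ arith_prog y c z.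
Proof.
move=> e_gt0 c_gt0 /eqP; rewrite eqn_mod_dvdz => /dvdzP[t xy_t].
have [u [v bezout]] : exists u v : int, (u * e + v * c)%R = Posz (gcdn e c).
  by have [u [v ?]] := Bezoutz e c; exists u, v.
pose K : int := (`|(u * t)%R|%N + `|(v * t)%R|%N)%N.
have le_uK : (u * t <= K)%R by rewrite /K; lia.
have le_vK : (- (v * t) <= K)%R by rewrite /K; lia.
have s_ge0 : (0 <= Posz c * K - u * t)%R by nia.
have r_ge0 : (0 <= v * t + Posz e * K)%R by nia.
exists (x + e * `|(Posz c * K - u * t)%R|)%N; split; first by eexists.
apply/arith_prog_int; exists (v * t + Posz e * K)%R => //.
rewrite PoszD PoszM gez0_abs // -[Posz x](subrK (Posz y)) xy_t -bezout; ring.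
Qed.

Lemma arith_prog_modeq (a b z : nat) : arith_prog a b z -> z = a %[mod b].
Proof. by move=> [n ->]; rewrite addnC mulnC modnMDl. Qed.

Lemma golomb_open_residue (b : nat) (S : nat -> Prop) : 1 < b ->
  (forall y, S y -> coprime y b) ->
  (forall y z, 0 < z -> y = z %[mod b] -> S y -> S z) -> golomb_open S.
Proof.
move=> b_gt1 S_coprime S_mod y Sy.
have yb_gt0 : 0 < y %% b.
  rewrite lt0n; apply: contraTneq (S_coprime y Sy) => yb0.
  by rewrite -coprime_modl yb0 /coprime gcd0n neq_ltn b_gt1 orbT.
exists (y %% b), b; split; rewrite ?coprime_modl ?(ltnW b_gt1) ?S_coprime //.
  by exists (y %/ b); rewrite addnC mulnC -divn_eq.
move=> z z_prog; apply: (S_mod y); last by [].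
  by case: z_prog => n ->; rewrite addn_gt0 yb_gt0.
by rewrite (arith_prog_modeq z_prog) modn_mod.
Qed.

Lemma golomb_open_prog (U : nat -> Prop) (m : nat) : golomb_open U -> U m ->
  exists b, [/\ 0 < b, coprime m b & forall z, arith_prog m b z -> U z].
Proof.
move=> U_open Um; have [a [b [_ b_gt0 coprime_ab m_prog ab_U]]] := U_open m Um.
exists b; split => //; first by rewrite -coprime_modl (arith_prog_modeq m_prog) coprime_modl.
case: m_prog => k ->{m Um} z [j ->].
by apply: ab_U; exists (k + j); rewrite mulnDr addnA.
Qed.

Definition contains_padic_ball (p : nat) (X W : nat -> Prop) (m : nat) : Prop :=
  exists2 n, 0 < n & forall y, X y -> y = m %[mod p ^ n] -> W y.

Lemma padic_open_subP (p : nat) (X W : nat -> Prop) :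
  padic_open_sub p X W <-> forall m, W m -> X m /\ contains_padic_ball p X W m.
Proof.
split=> [[U [U_open W_UX]] m /W_UX[Um Xm]|W_balls].
  have [n [n_gt0 U_ball]] := U_open _ Um.
  split=> //; exists n => // y Xy ym; apply/W_UX; split=> //.
  by apply: U_ball; rewrite -eqn_mod_dvdz ym.
exists (fun z : int => exists m n, [/\ 0 < n, forall y, X y -> y = m %[mod p ^ n] -> W y
                                    & (Posz (p ^ n) %| (z - Posz m)%R)%Z]).
split=> [z [m [n [n_gt0 m_ball zm]]]|m].
  exists n; split=> // y yz; exists m, n; split=> //.
  by rewrite -(subrK z y) -addrA rpredD.
split=> [Wm|[[m' [n [_ m'_ball mm']]] Xm]]; last first.
  by apply: m'_ball => //; apply/eqP; rewrite eqn_mod_dvdz.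
have [Xm [n n_gt0 m_ball]] := W_balls m Wm.
by split=> //; exists m, n; rewrite subrr dvdz0.
Qed.

Section NMinusPN.

Variable p : nat.
Hypothesis p_prime : prime p.

Local Notation X := (N_minus_pN p).
Local Notation golomb_sub_open := (subspace_open golomb_open X).

Lemma N_minus_pN_coprime (y : nat) : X y -> coprime y p.
Proof. by move=> [_ p_ndvd_y]; rewrite coprime_sym prime_coprime. Qed.

Lemma N_minus_pN_modeq (b y z : nat) : p %| b -> y = z %[mod b] -> X y -> X z.
Proof.
move=> p_dvd_b /(eqn_mod_dvdm p_dvd_b) yz [_ p_ndvd_y].
have p_ndvd_z : ~~ (p %| z) by rewrite /dvdn -yz.
by split=> //; rewrite lt0n; apply: contraNneq p_ndvd_z => ->.
Qed.

Lemma golomb_open_padic_class (n : nat) (Q : nat -> Prop) : 0 < n ->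
  golomb_open (fun y => X y /\ Q (y %% p ^ n)).
Proof.
move=> n_gt0; apply: (@golomb_open_residue (p ^ n)).
- by rewrite -{1}(expn0 p) ltn_exp2l // prime_gt1.
- by move=> y [Xy _]; rewrite coprime_pexpr // N_minus_pN_coprime.
- move=> y z _ yz [Xy Qy]; rewrite -yz; split=> //.
  exact: N_minus_pN_modeq (dvdn_exp n_gt0 (dvdnn p)) _ Xy.
Qed.

Lemma padic_class_clopen (n x : nat) : 0 < n ->
  clopen_in X golomb_sub_open (fun y => X y /\ y = x %[mod p ^ n]).
Proof.
move=> n_gt0; split; first by move=> y [].
- exists (fun y => X y /\ y = x %[mod p ^ n]); split; last by move=> y; tauto.
  exact: (golomb_open_padic_class (Q := fun r => r = x %% p ^ n) n_gt0).
- exists (fun y => X y /\ y <> x %[mod p ^ n]); split; last by move=> y; tauto.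
  exact: (golomb_open_padic_class (Q := fun r => r <> x %% p ^ n) n_gt0).
Qed.

Lemma golomb_sub_open_prog (S : nat -> Prop) (m : nat) : golomb_sub_open S -> S m ->
  exists b, [/\ 0 < b, p %| b, coprime m b & forall z, arith_prog m b z -> S z].
Proof.
move=> [U [U_open S_UX]] /S_UX[Um Xm].
have [b [b_gt0 coprime_mb mb_U]] := golomb_open_prog U_open Um.
exists (p * b); split.
- by rewrite muln_gt0 prime_gt0.
- exact: dvdn_mulr.
- by rewrite coprimeMr coprime_mb N_minus_pN_coprime.
move=> z z_prog; apply/S_UX; split.
  by case: z_prog => j ->; apply: mb_U; exists (p * j); rewrite mulnCA mulnA.
exact: N_minus_pN_modeq (dvdn_mulr b (dvdnn p)) (esym (arith_prog_modeq z_prog)) Xm.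
Qed.

Lemma golomb_sub_open_meets_prog (A B : nat -> Prop) (x y c d : nat) :
  golomb_sub_open A -> A x -> 0 < c * d -> (forall z, arith_prog y (c * d) z -> B z) ->
  c %| x -> x = y %[mod d] -> exists z, A z /\ B z.
Proof.
move=> A_open Ax cd_gt0 ycd_B c_dvd_x xy.
have [e [e_gt0 _ coprime_xe xe_A]] := golomb_sub_open_prog A_open Ax.
have g_dvd_d : gcdn e (c * d) %| d.
  have coprime_gc : coprime (gcdn e (c * d)) c.
    by apply: coprime_dvdl (dvdn_gcdl _ _) _; rewrite coprime_sym (coprime_dvdl c_dvd_x).
  by rewrite -(Gauss_dvdr _ coprime_gc) dvdn_gcdr.
have [z [xe_z ycd_z]] := arith_prog_meet e_gt0 cd_gt0 (eqn_mod_dvdm g_dvd_d xy).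
by exists z; split; [apply: xe_A | apply: ycd_B].
Qed.

Lemma golomb_sub_clopen_padic_ball (C : nat -> Prop) (m : nat) :
  clopen_in X golomb_sub_open C -> C m -> contains_padic_ball p X C m.
Proof.
move=> [_ C_open nC_open] Cm.
have [b [b_gt0 p_dvd_b _ mb_C]] := golomb_sub_open_prog C_open Cm.
have [b' coprime_pb' b_eq] := pfactor_coprime p_prime b_gt0.
have n_gt0 : 0 < logn p b by rewrite -pfactor_dvdn ?expn1.
exists (logn p b) => // y Xy ym; apply: NNPP => nCy.
have [c [c_gt0 _ _ yc_nC]] := golomb_sub_open_prog nC_open (conj Xy nCy).
have [c' coprime_pc' c_eq] := pfactor_coprime p_prime c_gt0.
rewrite b_eq in b_gt0 mb_C; rewrite c_eq in c_gt0 yc_nC.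
set n := logn p b in n_gt0 ym b_gt0 mb_C; set k := logn p c in c_gt0 yc_nC.
have nk_gt0 : 0 < n + k by rewrite addn_gt0 n_gt0.
have coprime_pk : coprime (p ^ (n + k)) (b' * c').
  by rewrite coprime_pexpl // coprimeMr coprime_pb' coprime_pc'.
pose x := chinese (p ^ (n + k)) (b' * c') y 0.
have xy : x = y %[mod p ^ (n + k)] := chinese_modl coprime_pk y 0.
have b'c'_dvd_x : b' * c' %| x by rewrite /dvdn (chinese_modr coprime_pk) mod0n.
have Xx : X x := N_minus_pN_modeq (dvdn_exp nk_gt0 (dvdnn p)) (esym xy) Xy.
case: (classic (C x)) => [Cx|nCx].
  have [z [Cz [_ nCz]]] := golomb_sub_open_meets_prog C_open Cx c_gt0 yc_nC
    (dvdn_trans (dvdn_mull b' (dvdnn c')) b'c'_dvd_x)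
    (eqn_mod_dvdm (dvdn_exp2l p (leq_addl n k)) xy).
  exact: nCz.
have xm : x = m %[mod p ^ n].
  by rewrite -ym; apply: eqn_mod_dvdm (dvdn_exp2l p (leq_addr k n)) xy.
have [z [[_ nCz] Cz]] := golomb_sub_open_meets_prog nC_open (conj Xx nCx) b_gt0 mb_C
  (dvdn_trans (dvdn_mulr c' (dvdnn b')) b'c'_dvd_x) xm.
exact: nCz.
Qed.

End NMinusPN.

Theorem lemma3p2 (p : nat) : prime p ->
  forall W : nat -> Prop,
    padic_open_sub p (N_minus_pN p) W <->
    zero_dim_reflection_open (N_minus_pN p)
      (subspace_open golomb_open (N_minus_pN p)) W.
Proof.
move=> p_prime W; split.
  move=> /padic_open_subP W_open x /W_open[Xx [n n_gt0 x_ball]].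
  exists (fun y => N_minus_pN p y /\ y = x %[mod p ^ n]); split.
  - exact: padic_class_clopen.
  - by [].
  - by move=> y [Xy yx]; apply: x_ball.
move=> W_zero_dim; apply/padic_open_subP => m /W_zero_dim[C [C_clopen Cm CW]].
have [CX _ _] := C_clopen; split; first exact: CX.
have [n n_gt0 C_ball] := golomb_sub_clopen_padic_ball p_prime C_clopen Cm.
by exists n => // y Xy ym; apply: CW; apply: C_ball.
Qed.
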